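(* Let $A,B\in\mathcal{B}(\mathcal{H})$ and let $B=X+iY$ be the Cartesian decomposition of $B$. Then: (i) if $XY+YX=0$, then $w(AB\pm BA^* )\leq 2\|A\|\max\{w^{1/2}(X^2),w^{1/2}(Y^2)\}$; (ii) if $B$ is self-adjoint, then $w(AB\pm BA^* )\leq 2\|A\|\,w^{1/2}(X^2)$; (iii) if $B$ is self-adjoint, then $w(AB)\leq\|A\|\,w^{1/2}(X^2)$.
   Context: $\mathcal{H}$ is a complex Hilbert space, $\mathcal{B}(\mathcal{H})$ the bounded linear operators on it, $w$ the numerical radius, $\|\cdot\|$ the operator norm. The Cartesian decomposition $B=X+iY$ means $X=\frac{B+B^*}{2}$, $Y=\frac{B-B^*}{2i}$ (both self-adjoint). *)

From HB Require Import structures.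
From mathcomp Require Import all_boot all_order all_algebra.
From mathcomp Require Import complex.
From mathcomp Require Import all_classical all_reals.
Set Implicit Arguments. Unset Strict Implicit. Unset Printing Implicit Defensive.
Import Order.TTheory GRing.Theory Num.Theory.
Local Open Scope ring_scope.

Section Hilbert.
Variable R : realType.
Variable H : lmodType R[i].
Variable ip : H -> H -> R[i].

Definition hnorm (x : H) : R := Num.sqrt (complex.Re (ip x x)).

Record isHilbert : Prop := {
  ip_linear : forall (a : R[i]) (x y z : H), ip (a *: x + y) z = a * ip x z + ip y z;
  ip_conj : forall x y : H, ip y x = (ip x y)^*;
  ip_pos : forall x : H, 0 <= ip x x;
  ip_def : forall x : H, ip x x = 0 -> x = 0;
  ip_complete : forall u : nat -> H,
    (forall e : R, 0 < e -> exists N : nat, forall m n : nat,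
        (N <= m)%N -> (N <= n)%N -> hnorm (u m - u n) < e) ->
    exists l : H, forall e : R, 0 < e -> exists N : nat, forall n : nat,
        (N <= n)%N -> hnorm (u n - l) < e
}.

Definition bounded_op (T : H -> H) : Prop :=
  (forall (a : R[i]) (x y : H), T (a *: x + y) = a *: T x + T y) /\
  exists M : R, forall x : H, hnorm (T x) <= M * hnorm x.

Definition is_adjoint (T T' : H -> H) : Prop :=
  forall x y : H, ip (T x) y = ip x (T' y).

Definition opnorm (T : H -> H) : R :=
  sup [set hnorm (T x) | x in [set x | hnorm x = 1]]%classic.

Definition numrad (T : H -> H) : R :=
  sup [set ComplexField.Normc.normc (ip (T x) x) | x in [set x | hnorm x = 1]]%classic.

End Hilbert.

From HB Require Import structures.
From mathcomp Require Import all_boot all_order all_algebra.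
From mathcomp Require Import complex.
From mathcomp Require Import all_classical all_reals.
From mathcomp Require Import ring lra.
Import Order.TTheory GRing.Theory Num.Theory.
Local Open Scope ring_scope.
Set Implicit Arguments. Unset Strict Implicit. Unset Printing Implicit Defensive.

(* Write B = X + iY and, for a unit vector x, put p = X x, q = Y x and y = A^* x.
   Then <(AB + e BA^* ) x, x> = <p + iq, y> + e <y, p - iq>.  For e = 1 this is
   2 (Re <p, y> + i Re <q, y>); for e = -1 it is i times the same expression
   with p, q replaced by -ip, -iq, which changes neither Re <p, q> nor the norms.
   If XY + YX = 0 then Re <p, q> = 0, and Cauchy-Schwarz for the vector
   Re <p, y> p + Re <q, y> q gives Re <p, y>^2 + Re <q, y>^2 <= M^2 |y|^2 whenever
   |p|, |q| <= M.  Finally |p|^2 = <X^2 x, x> <= w(X^2), likewise for q, and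
   |y| <= ||A||.  A self-adjoint B is the case Y = 0, and (iii) is Cauchy-Schwarz
   for <ABx, x> = <Xx, A^* x>. *)

Local Notation normc := ComplexField.Normc.normc.

Section ComplexNorm.
Variable R : rcfType.
Implicit Types (a b : R) (z : R[i]).

Lemma normc_ge0 z : 0 <= normc z.
Proof. by case: z => a b; apply: sqrtr_ge0. Qed.

Lemma sqr_normc z : normc z ^+ 2 = complex.Re z ^+ 2 + complex.Im z ^+ 2.
Proof. by case: z => a b; rewrite sqr_sqrtr // addr_ge0 ?sqr_ge0. Qed.

Lemma normc_real a : 0 <= a -> normc a%:C%C = a.
Proof. by move=> a0; rewrite /= expr0n addr0 sqrtr_sqr ger0_norm. Qed.

Lemma normc_conj z : normc (Num.conj z) = normc z.
Proof. by case: z => a b; rewrite /= sqrrN. Qed.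

Lemma normcNi : normc (- 'i : R[i]) = 1.
Proof. by rewrite /= oppr0 expr0n sqrrN expr1n add0r sqrtr1. Qed.

End ComplexNorm.

Lemma le_of_sqr_le_mul (R : realDomainType) (s L : R) :
  0 <= s -> 0 <= L -> s ^+ 2 <= L * s -> s <= L.
Proof. by move=> s0 L0 h; nra. Qed.

(* [sup set0 = 0], hence the hypothesis [0 <= c]. *)
Lemma sup_le_nneg (R : realType) (E : set R) c :
  0 <= c -> ubound E c -> sup E <= c.
Proof.
move=> c0 Ec; have [->|/set0P E0] := eqVneq E set0%classic; first by rewrite sup0.
exact: ge_sup.
Qed.

Section InnerProduct.
Variables (R : realType) (H : lmodType R[i]) (ip : H -> H -> R[i]).
Hypothesis hH : isHilbert ip.
Local Notation hnorm := (hnorm ip).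
Implicit Types (x y z : H) (a : R[i]) (c : R).

Lemma ipDl x y z : ip (x + y) z = ip x z + ip y z.
Proof. by have := ip_linear hH 1 x y z; rewrite scale1r mul1r. Qed.

Lemma ip0l z : ip 0 z = 0.
Proof. by apply: (addrI (ip 0 z)); rewrite -ipDl !addr0. Qed.

Lemma ipZl a x z : ip (a *: x) z = a * ip x z.
Proof. by have := ip_linear hH a x 0 z; rewrite !addr0 ip0l addr0. Qed.

Lemma ipBl x y z : ip (x - y) z = ip x z - ip y z.
Proof. by rewrite -scaleN1r ipDl ipZl mulN1r. Qed.

Lemma ipDr x y z : ip x (y + z) = ip x y + ip x z.
Proof. by rewrite !(ip_conj hH _ x) ipDl rmorphD. Qed.

Lemma ipZr a x z : ip x (a *: z) = Num.conj a * ip x z.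
Proof. by rewrite !(ip_conj hH _ x) ipZl rmorphM. Qed.

Lemma ipBr x y z : ip x (y - z) = ip x y - ip x z.
Proof. by rewrite -scaleN1r ipDr ipZr rmorphN1 mulN1r. Qed.

Lemma ip0r z : ip z 0 = 0.
Proof. by rewrite ip_conj // ip0l rmorph0. Qed.

Definition rip x y : R := complex.Re (ip x y).

Lemma ip_self x : ip x x = (rip x x)%:C%C.
Proof.
by rewrite /rip; case: (ip x x) (ip_pos hH x) => a b; rewrite lecE /= => /andP[/eqP-> _].
Qed.

Lemma rip_self_ge0 x : 0 <= rip x x.
Proof. by rewrite /rip; case: (ip x x) (ip_pos hH x) => a b; rewrite lecE => /andP[]. Qed.

Lemma ripC x y : rip x y = rip y x.
Proof. by rewrite /rip (ip_conj hH x); case: (ip x y). Qed.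

Lemma ripDl x y z : rip (x + y) z = rip x z + rip y z.
Proof. by rewrite /rip ipDl; case: (ip x z); case: (ip y z). Qed.

Lemma ripDr x y z : rip x (y + z) = rip x y + rip x z.
Proof. by rewrite ripC ripDl !(ripC _ x). Qed.

Lemma ripZl c x z : rip (c%:C%C *: x) z = c * rip x z.
Proof. by rewrite /rip ipZl; case: (ip x z) => a b /=; rewrite mul0r subr0. Qed.

Lemma ripZr c x z : rip x (c%:C%C *: z) = c * rip x z.
Proof. by rewrite ripC ripZl ripC. Qed.

Lemma rip0r x : rip x 0 = 0.
Proof. by rewrite /rip ip0r. Qed.

Lemma hnormE x : hnorm x = Num.sqrt (rip x x).
Proof. by []. Qed.

Lemma hnorm_ge0 x : 0 <= hnorm x.
Proof. exact: sqrtr_ge0. Qed.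

Lemma sqr_hnorm x : hnorm x ^+ 2 = rip x x.
Proof. by rewrite sqr_sqrtr // rip_self_ge0. Qed.

Lemma hnorm0 : hnorm 0 = 0.
Proof. by rewrite hnormE rip0r sqrtr0. Qed.

Lemma hnorm_eq0 x : hnorm x = 0 -> x = 0.
Proof.
move=> x0; apply: (ip_def hH).
by rewrite ip_self -sqr_hnorm x0 expr0n.
Qed.

Lemma rip_sqr_le x y : rip x y ^+ 2 <= rip x x * rip y y.
Proof.
have [/hnorm_eq0 ->|y_neq0] := eqVneq (hnorm y) 0.
  by rewrite rip0r expr0n /= mulr_ge0 ?rip_self_ge0.
have y_gt0 : 0 < rip y y by rewrite -sqr_hnorm exprn_gt0 // lt_def y_neq0 hnorm_ge0.
have := rip_self_ge0 ((rip y y)%:C%C *: x + (- rip x y)%:C%C *: y).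
rewrite !(ripDl, ripDr, ripZl, ripZr) (ripC y x).
by have := rip_self_ge0 x; nra.
Qed.

Lemma rip_le x y : rip x y <= hnorm x * hnorm y.
Proof.
have := rip_sqr_le x y; rewrite -!sqr_hnorm -exprMn.
have := mulr_ge0 (hnorm_ge0 x) (hnorm_ge0 y).
by move: (hnorm x * hnorm y) => p; nra.
Qed.

Lemma hnormZ a x : hnorm (a *: x) = normc a * hnorm x.
Proof.
rewrite !hnormE; have -> : rip (a *: x) (a *: x) = normc a ^+ 2 * rip x x.
  rewrite /rip ipZl ipZr ip_self sqr_normc.
  by case: a => a1 a2 /=; ring.
by rewrite sqrtrM ?sqr_ge0 // sqrtr_sqr ger0_norm ?normc_ge0.
Qed.

Lemma normc_ip_le x y : normc (ip x y) <= hnorm x * hnorm y.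
Proof.
(* Scaling x by the conjugate of z = <x, y> makes the pairing real: it becomes |z|^2. *)
set z := ip x y; have := rip_le (Num.conj z *: x) y.
have -> : rip (Num.conj z *: x) y = normc z ^+ 2.
  by rewrite /rip ipZl sqr_normc -/z; case: z => a b /=; ring.
rewrite hnormZ normc_conj -mulrA => h.
by apply: le_of_sqr_le_mul; rewrite ?normc_ge0 ?mulr_ge0 ?hnorm_ge0 // mulrC.
Qed.

Lemma hnormD x y : hnorm (x + y) <= hnorm x + hnorm y.
Proof.
have := sqr_hnorm (x + y); rewrite ripDl !ripDr (ripC y x) -!sqr_hnorm.
have := rip_le x y; have := hnorm_ge0 x; have := hnorm_ge0 y.
by have := hnorm_ge0 (x + y); nra.
Qed.

Lemma hnormB x y : hnorm (x - y) <= hnorm x + hnorm y.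
Proof.
rewrite -scaleN1r; apply: le_trans (hnormD _ _) _.
by rewrite hnormZ normcN ComplexField.Normc.normc1 mul1r.
Qed.

Lemma rip_bessel p q y M : rip p q = 0 -> hnorm p <= M -> hnorm q <= M ->
  rip p y ^+ 2 + rip q y ^+ 2 <= M ^+ 2 * hnorm y ^+ 2.
Proof.
move=> pq0 pM qM; set c := rip p y; set s := rip q y.
have := rip_sqr_le (c%:C%C *: p + s%:C%C *: q) y.
rewrite !(ripDl, ripZl) !(ripDr, ripZr) (ripC q p) pq0 -/c -/s -!sqr_hnorm.
have sqr_le_M u : 0 <= u -> u <= M -> u ^+ 2 <= M ^+ 2 by move=> ? ?; nra.
have : c ^+ 2 * hnorm p ^+ 2 + s ^+ 2 * hnorm q ^+ 2 <= (c ^+ 2 + s ^+ 2) * M ^+ 2.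
  by rewrite mulrDl; apply: lerD; apply: ler_wpM2l; rewrite ?sqr_ge0 ?sqr_le_M ?hnorm_ge0.
move: (hnorm p ^+ 2) (hnorm q ^+ 2) => P Q h1 h2.
apply: le_of_sqr_le_mul.
- exact: addr_ge0 (sqr_ge0 _) (sqr_ge0 _).
- exact: mulr_ge0 (sqr_ge0 _) (sqr_ge0 _).
- rewrite -!expr2 in h2; apply: le_trans h2 _.
  by have := sqr_ge0 (hnorm y); nra.
Qed.

Lemma sqr_normc_form_add p q y :
  normc (ip (p + 'i *: q) y + ip y (p - 'i *: q)) ^+ 2 =
  4 * (rip p y ^+ 2 + rip q y ^+ 2).
Proof.
rewrite ipDl ipZl ipBr ipZr (ip_conj hH p y) (ip_conj hH q y) sqr_normc /rip.
by case: (ip p y) => a b; case: (ip q y) => c d /=; ring.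
Qed.

Lemma sqr_normc_form_sub p q y :
  normc (ip (p + 'i *: q) y - ip y (p - 'i *: q)) ^+ 2 =
  4 * (rip (- 'i *: p) y ^+ 2 + rip (- 'i *: q) y ^+ 2).
Proof.
rewrite ipDl ipZl ipBr ipZr (ip_conj hH p y) (ip_conj hH q y) sqr_normc /rip !ipZl.
by case: (ip p y) => a b; case: (ip q y) => c d /=; ring.
Qed.

Lemma rip_rot p q : rip (- 'i *: p) (- 'i *: q) = rip p q.
Proof. by rewrite /rip ipZl ipZr; case: (ip p q) => a b /=; ring. Qed.

Lemma hnorm_rot p : hnorm (- 'i *: p) = hnorm p.
Proof. by rewrite hnormZ normcNi mul1r. Qed.

Lemma normc_form_le e p q y M : e = 1 \/ e = -1 ->
  rip p q = 0 -> hnorm p <= M -> hnorm q <= M ->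
  normc (ip (p + 'i *: q) y + e * ip y (p - 'i *: q)) <= 2 * M * hnorm y.
Proof.
move=> e_pm1 pq0 pM qM; have M0 : 0 <= M := le_trans (hnorm_ge0 p) pM.
rewrite -(ler_pXn2r (_ : 0 < 2)%N) ?nnegrE ?normc_ge0 ?mulr_ge0 ?hnorm_ge0 //.
rewrite !exprMn -mulrA [2 ^+ 2](_ : _ = 4); last by rewrite expr2 -natrM.
case: e_pm1 => ->;
  rewrite ?mul1r ?sqr_normc_form_add ?mulN1r ?sqr_normc_form_sub ler_wpM2l //;
  by apply: rip_bessel; rewrite ?rip_rot ?hnorm_rot.
Qed.

End InnerProduct.

Section Operators.
Variables (R : realType) (H : lmodType R[i]) (ip : H -> H -> R[i]).
Hypothesis hH : isHilbert ip.
Local Notation hnorm := (hnorm ip).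
Local Notation rip := (rip ip).
Implicit Types (T Ts F G : H -> H) (x y z : H).

Lemma bounded_op0 T : bounded_op ip T -> T 0 = 0.
Proof.
case=> T_lin _; have := T_lin 1 0 0; rewrite !scale1r addr0 => T0.
by apply: (addrI (T 0)); rewrite -T0 addr0.
Qed.

Lemma bounded_opZ T a x : bounded_op ip T -> T (a *: x) = a *: T x.
Proof. by move=> hT; rewrite -[a *: x]addr0 hT.1 bounded_op0 // addr0. Qed.

Lemma opnorm_ub T x : bounded_op ip T -> hnorm x = 1 -> hnorm (T x) <= opnorm ip T.
Proof.
case=> _ [M TM] x1; apply: ub_le_sup; last by exists x.
by exists M => _ [y /= y1 <-]; rewrite -[M]mulr1 -y1.
Qed.

Lemma opnorm_ge0 T : bounded_op ip T -> 0 <= opnorm ip T.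
Proof.
move=> hT; have [[x x1]|no_unit] := pselect (exists x, hnorm x = 1).
  exact: le_trans (hnorm_ge0 ip _) (opnorm_ub hT x1).
rewrite /opnorm; suff -> : [set hnorm (T x) | x in [set x | hnorm x = 1]]%classic = set0.
  by rewrite sup0.
by apply/seteqP; split=> // r [x x1 _]; apply: no_unit; exists x.
Qed.

Lemma hnorm_op_le T z : bounded_op ip T -> hnorm (T z) <= opnorm ip T * hnorm z.
Proof.
move=> hT; have [/(hnorm_eq0 hH)->|z_neq0] := eqVneq (hnorm z) 0.
  by rewrite bounded_op0 // (hnorm0 hH) mulr0.
have z_gt0 : 0 < hnorm z by rewrite lt_def z_neq0 hnorm_ge0.
have inv_ge0 : 0 <= (hnorm z)^-1 by rewrite invr_ge0 ltW.
have := opnorm_ub hT (x := (hnorm z)^-1%:C%C *: z).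
rewrite bounded_opZ // !(hnormZ hH) normc_real // mulVf // => /(_ erefl).
by rewrite ler_pdivrMl // mulrC.
Qed.

Lemma adjoint_sym T Ts : is_adjoint ip T Ts -> is_adjoint ip Ts T.
Proof. by move=> adj x y; rewrite (ip_conj hH) -adj -(ip_conj hH). Qed.

Lemma hnorm_adjoint_le T Ts z : bounded_op ip T -> is_adjoint ip T Ts ->
  hnorm (Ts z) <= opnorm ip T * hnorm z.
Proof.
move=> hT adj; apply: le_of_sqr_le_mul;
  rewrite ?hnorm_ge0 ?mulr_ge0 ?opnorm_ge0 ?hnorm_ge0 //.
have -> : hnorm (Ts z) ^+ 2 = rip (T (Ts z)) z by rewrite (sqr_hnorm hH) /rip adj.
apply: le_trans (rip_le hH _ _) _; rewrite mulrAC ler_wpM2r ?hnorm_ge0 //.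
exact: hnorm_op_le.
Qed.

Lemma hnorm_adjoint_unit_le T Ts x : bounded_op ip T -> is_adjoint ip T Ts ->
  hnorm x = 1 -> hnorm (Ts x) <= opnorm ip T.
Proof. by move=> hT adj x1; have := hnorm_adjoint_le x hT adj; rewrite x1 mulr1. Qed.

Lemma rip_adjoint T Ts x y : is_adjoint ip T Ts -> rip (T x) y = rip x (Ts y).
Proof. by move=> adj; rewrite /rip adj. Qed.

Lemma numrad_le T c : 0 <= c ->
  (forall x, hnorm x = 1 -> normc (ip (T x) x) <= c) -> numrad ip T <= c.
Proof. by move=> c0 Tc; apply: sup_le_nneg => // _ [x /= x1 <-]; apply: Tc. Qed.

(* The bound on [F] only makes the supremum defining [numrad] that of a bounded set. *)
Lemma hnorm_le_sqrt_numrad F x : is_adjoint ip F F ->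
  (exists M, forall y, hnorm y = 1 -> hnorm (F y) <= M) -> hnorm x = 1 ->
  hnorm (F x) <= Num.sqrt (numrad ip (fun y => F (F y))).
Proof.
move=> sa [M FM] x1.
have val y : normc (ip (F (F y)) y) = hnorm (F y) ^+ 2.
  by rewrite sa (ip_self hH) normc_real ?rip_self_ge0 ?sqr_hnorm.
have FFx_le : hnorm (F x) ^+ 2 <= numrad ip (fun y => F (F y)).
  rewrite -val; apply: ub_le_sup; last by exists x.
  exists (M ^+ 2) => _ [y /= y1 <-]; rewrite val.
  by have := FM y y1; have := hnorm_ge0 ip (F y); nra.
rewrite -[hnorm (F x)]ger0_norm ?hnorm_ge0 // -sqrtr_sqr ler_sqrt //.
exact: le_trans (sqr_ge0 _) FFx_le.
Qed.

Lemma anticommuting_rip_eq0 F G x : is_adjoint ip F F -> is_adjoint ip G G ->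
  F (G x) + G (F x) = 0 -> rip (F x) (G x) = 0.
Proof.
move=> saF saG /(congr1 (rip^~ x)).
rewrite (ripDl hH) (rip_adjoint (G x) _ saF) (rip_adjoint (F x) _ saG).
by rewrite (ripC hH 0) (rip0r hH) (ripC hH (G x)); lra.
Qed.

End Operators.

Section CartesianDecomposition.
Variables (R : realType) (H : lmodType R[i]) (ip : H -> H -> R[i]).
Hypothesis hH : isHilbert ip.
Local Notation hnorm := (hnorm ip).
Local Notation rip := (rip ip).
Variables A As B Bs : H -> H.
Hypotheses (hA : bounded_op ip A) (hB : bounded_op ip B).
Hypotheses (hAs : is_adjoint ip A As) (hBs : is_adjoint ip B Bs).

Definition re_op x := (2 : R[i])^-1 *: (B x + Bs x).
Definition im_op x := (2 * 'i : R[i])^-1 *: (B x - Bs x).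

Lemma is_adjoint_re_op : is_adjoint ip re_op re_op.
Proof.
move=> x y; rewrite /re_op (ipZl hH) (ipZr hH) (ipDl hH) (ipDr hH).
by rewrite (adjoint_sym hH hBs) hBs fmorphV rmorph_nat addrC.
Qed.

Lemma is_adjoint_im_op : is_adjoint ip im_op im_op.
Proof.
move=> x y; rewrite /im_op (ipZl hH) (ipZr hH) (ipBl hH) (ipBr hH).
rewrite (adjoint_sym hH hBs) hBs fmorphV rmorphM rmorph_nat /= conjCi.
by rewrite mulrN invrN mulNr -mulrN opprB.
Qed.

Let i_half : ('i : R[i]) * (2 * 'i)^-1 = 2^-1.
Proof. by rewrite invfM mulrCA mulfV ?neq0Ci ?mulr1. Qed.

Let half_double (v : H) : (2 : R[i])^-1 *: (v *+ 2) = v.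
Proof. by rewrite -[v *+ 2]scaler_nat scalerA mulVf ?scale1r ?pnatr_eq0. Qed.

Lemma cartesianE x : B x = re_op x + 'i *: im_op x.
Proof.
rewrite /re_op /im_op scalerA i_half -scalerDr addrACA subrr addr0.
by rewrite -mulr2n half_double.
Qed.

Lemma cartesian_adjE x : Bs x = re_op x - 'i *: im_op x.
Proof.
rewrite /re_op /im_op scalerA i_half -scalerBr opprB addrC addrA subrK.
by rewrite -mulr2n half_double.
Qed.

Let hnorm_B_Bs_le x : hnorm x = 1 ->
  hnorm (B x) + hnorm (Bs x) <= opnorm ip B + opnorm ip B.
Proof.
by move=> x1; apply: lerD; [exact: opnorm_ub | exact: hnorm_adjoint_unit_le hBs x1].
Qed.

Lemma re_op_bounded : exists M, forall x, hnorm x = 1 -> hnorm (re_op x) <= M.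
Proof.
exists (normc (2^-1 : R[i]) * (opnorm ip B + opnorm ip B)) => x x1.
rewrite (hnormZ hH) ler_wpM2l ?normc_ge0 //.
exact: le_trans (hnormD hH _ _) (hnorm_B_Bs_le x1).
Qed.

Lemma im_op_bounded : exists M, forall x, hnorm x = 1 -> hnorm (im_op x) <= M.
Proof.
exists (normc ((2 * 'i)^-1 : R[i]) * (opnorm ip B + opnorm ip B)) => x x1.
rewrite (hnormZ hH) ler_wpM2l ?normc_ge0 //.
exact: le_trans (hnormB hH _ _) (hnorm_B_Bs_le x1).
Qed.

Lemma numrad_cartesian_le e M : e = 1 \/ e = -1 -> 0 <= M ->
  (forall x, hnorm x = 1 ->
     [/\ rip (re_op x) (im_op x) = 0, hnorm (re_op x) <= M & hnorm (im_op x) <= M]) ->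
  numrad ip (fun x => A (B x) + e *: B (As x)) <= 2 * opnorm ip A * M.
Proof.
move=> e_pm1 M0 XY; apply: numrad_le => [|x x1].
  by rewrite !mulr_ge0 ?opnorm_ge0.
have [pq0 pM qM] := XY x x1.
rewrite (ipDl hH) (ipZl hH) hAs (hBs (As x)) cartesianE cartesian_adjE.
apply: le_trans (normc_form_le hH _ e_pm1 pq0 pM qM) _.
rewrite mulrAC ler_wpM2r // ler_wpM2l //.
exact: hnorm_adjoint_unit_le hAs x1.
Qed.

Lemma re_op_hermitian : (forall x, Bs x = B x) -> forall x, re_op x = B x.
Proof. by move=> BsB x; rewrite /re_op BsB -mulr2n half_double. Qed.

Lemma im_op_hermitian : (forall x, Bs x = B x) -> forall x, im_op x = 0.
Proof. by move=> BsB x; rewrite /im_op BsB subrr scaler0. Qed.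

Lemma numrad_AB_le : (forall x, Bs x = B x) ->
  numrad ip (fun x => A (B x)) <=
  opnorm ip A * Num.sqrt (numrad ip (fun x => re_op (re_op x))).
Proof.
move=> BsB; apply: numrad_le => [|x x1]; first by rewrite mulr_ge0 ?opnorm_ge0 ?sqrtr_ge0.
rewrite hAs; apply: le_trans (normc_ip_le hH _ _) _.
rewrite mulrC ler_pM ?hnorm_ge0 //; first exact: hnorm_adjoint_unit_le hAs x1.
rewrite -re_op_hermitian //.
exact: hnorm_le_sqrt_numrad is_adjoint_re_op re_op_bounded x1.
Qed.

End CartesianDecomposition.

Theorem corollary2p14 (R : realType) (H : lmodType R[i]) (ip : H -> H -> R[i])
  (hH : isHilbert ip) (A As B Bs : H -> H)
  (hA : bounded_op ip A) (hB : bounded_op ip B)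
  (hAs : is_adjoint ip A As) (hBs : is_adjoint ip B Bs) :
  let X := fun x => (2 : R[i])^-1 *: (B x + Bs x) in
  let Y := fun x => (2 * 'i : R[i])^-1 *: (B x - Bs x) in
  (* (i) *)
  ((forall x, X (Y x) + Y (X x) = 0) ->
     forall e : R[i], e = 1 \/ e = -1 ->
       numrad ip (fun x => A (B x) + e *: B (As x))
         <= 2 * opnorm ip A
              * Num.max (Num.sqrt (numrad ip (fun x => X (X x))))
                        (Num.sqrt (numrad ip (fun x => Y (Y x))))) /\
  (* (ii) *)
  ((forall x, Bs x = B x) ->
     forall e : R[i], e = 1 \/ e = -1 ->
       numrad ip (fun x => A (B x) + e *: B (As x))
         <= 2 * opnorm ip A * Num.sqrt (numrad ip (fun x => X (X x)))) /\
  (* (iii) *)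
  ((forall x, Bs x = B x) ->
     numrad ip (fun x => A (B x))
       <= opnorm ip A * Num.sqrt (numrad ip (fun x => X (X x)))).
Proof.
move=> X Y.
have X_sa : is_adjoint ip X X := is_adjoint_re_op hH hBs.
have Y_sa : is_adjoint ip Y Y := is_adjoint_im_op hH hBs.
have X_le x : hnorm ip x = 1 -> hnorm ip (X x) <= Num.sqrt (numrad ip (fun x => X (X x))).
  exact: hnorm_le_sqrt_numrad X_sa (re_op_bounded hH hB hBs).
have Y_le x : hnorm ip x = 1 -> hnorm ip (Y x) <= Num.sqrt (numrad ip (fun x => Y (Y x))).
  exact: hnorm_le_sqrt_numrad Y_sa (im_op_bounded hH hB hBs).
split; [|split].
- move=> XY e e_pm1; apply: (numrad_cartesian_le hH hA hAs hBs e_pm1).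
    by rewrite le_max sqrtr_ge0.
  move=> x x1; split; first exact: anticommuting_rip_eq0 X_sa Y_sa (XY x).
    by rewrite le_max X_le.
  by rewrite le_max Y_le ?orbT.
- move=> BsB e e_pm1; apply: (numrad_cartesian_le hH hA hAs hBs e_pm1).
    exact: sqrtr_ge0.
  move=> x x1; rewrite (im_op_hermitian BsB) (rip0r hH) (hnorm0 hH).
  by split; [| exact: X_le | exact: sqrtr_ge0].
- by move=> BsB; apply: numrad_AB_le.
Qed.
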